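(* Let $Y$ be a locally compact metrizable space and let $\Phi\colon\mathbb{R}\curvearrowright Y$ be a continuous action with bounded periods. Then the orbit space $Y/\mathbb{R}$ is metrizable.
   Context: The action has bounded periods if there is $R>0$ such that for every $y\in Y$ the orbit $\Phi_{\mathbb{R}}(y)$ equals $\{\Phi_t(y): t\in[0,R]\}$. $Y/\mathbb{R}$ carries the quotient topology. *)

From HB Require Import structures.
From mathcomp Require Import all_boot all_order all_algebra.
From mathcomp Require Import all_classical all_reals all_analysis.
Set Implicit Arguments. Unset Strict Implicit. Unset Printing Implicit Defensive.
Import Order.TTheory GRing.Theory Num.Theory numFieldNormedType.Exports.
Local Open Scope classical_set_scope.
Local Open Scope ring_scope.

Definition metrizable (R : realType) (T : topologicalType) : Prop :=
  exists d : T -> T -> R,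
    [/\ (forall x y, 0 <= d x y),
        (forall x y, d x y = 0 <-> x = y),
        (forall x y, d x y = d y x),
        (forall x y z, d x z <= d x y + d y z) &
        (forall U : set T, open U <->
           (forall x, U x -> exists2 e : R, 0 < e & [set y | d x y < e] `<=` U))].

Section OrbitSpace.
Variables (R : realType) (Y : topologicalType) (Phi : R -> Y -> Y).

Definition orbit (y : Y) : set Y := [set Phi t y | t in [set: R]].

Definition is_orbit (A : set Y) : bool := `[< exists y, A = orbit y >].
Definition orbit_space : Type := {A : set Y | is_orbit A}.

HB.instance Definition _ := [Choice of orbit_space by <:].

Lemma orbit_in (y : Y) : is_orbit (orbit y).
Proof. by apply/asboolP; exists y. Qed.

Definition orbit_proj (y : Y) : orbit_space := exist _ (orbit y) (orbit_in y).

Definition orbit_space_open (U : set orbit_space) : Prop := open (orbit_proj @^-1` U).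

Program Definition orbit_space_topology_mixin :=
  @isOpenTopological.Build orbit_space orbit_space_open _ _ _.
Next Obligation. by rewrite /orbit_space_open preimage_setT; exact: openT. Qed.
Next Obligation. by move=> ? ? ? ?; exact: openI. Qed.
Next Obligation. by move=> I f ofi; apply: bigcup_open => i _; exact: ofi. Qed.
HB.instance Definition _ := orbit_space_topology_mixin.

End OrbitSpace.

Definition continuous_action (R : realType) (Y : topologicalType)
  (Phi : R -> Y -> Y) : Prop :=
  [/\ (forall y, Phi 0 y = y),
      (forall s t y, Phi (s + t) y = Phi s (Phi t y)) &
      continuous (fun p : R * Y => Phi p.1 p.2)].

Definition bounded_periods (R : realType) (Y : topologicalType)
  (Phi : R -> Y -> Y) : Prop :=
  exists2 r : R, 0 < r &
    forall y, orbit Phi y = [set Phi t y | t in `[0, r]].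

(* The orbits are compact, since each is the image of [0, r] under the
   continuous map t |-> Phi t y.  So the Hausdorff distance of the metric of Y,
   truncated at 1 so that all the infima and suprema involved are of bounded
   sets, is a metric on the orbit space: it separates orbits because
   orbits are closed.  It induces the quotient topology: a ball around y in Y
   projects into a Hausdorff ball around its orbit, and conversely, by
   uniform continuity of the action on the compact time interval [0, r], points
   close to y have orbits Hausdorff-close to the orbit of y. *)

From Pilot Require Import Defs.
From HB Require Import structures.
From mathcomp Require Import all_boot all_order all_algebra.
From mathcomp Require Import all_classical all_reals all_analysis.
From mathcomp Require Import lra.
Import Order.TTheory GRing.Theory Num.Theory numFieldNormedType.Exports.
Set Implicit Arguments. Unset Strict Implicit. Unset Printing Implicit Defensive.
Local Open Scope classical_set_scope.
Local Open Scope ring_scope.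

Section HausdorffDistance.
Variables (R : realType) (T : Type) (e : T -> T -> R).
Hypothesis e_ge0 : forall x y, 0 <= e x y.
Hypothesis e_le1 : forall x y, e x y <= 1.
Hypothesis exx : forall x, e x x = 0.
Hypothesis e_triangle : forall x y z, e x z <= e x y + e y z.

Definition set_dist x (A : set T) := inf [set e x a | a in A].

Let set_dist_has_lbound x A : has_lbound [set e x a | a in A].
Proof. by exists 0 => _ [a _ <-]. Qed.

Lemma set_dist_le x A a : A a -> set_dist x A <= e x a.
Proof. by move=> Aa; apply: ge_inf; [exact: set_dist_has_lbound | exists a]. Qed.

Lemma set_dist_ge x A c :
  A !=set0 -> (forall a, A a -> c <= e x a) -> c <= set_dist x A.
Proof.
move=> [a Aa] lbc; apply: lb_le_inf; first by exists (e x a), a.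
by move=> _ [b Ab <-]; exact: lbc.
Qed.

Lemma set_dist_ge0 x A : A !=set0 -> 0 <= set_dist x A.
Proof. by move=> A0; exact: set_dist_ge. Qed.

Lemma set_dist_le1 x A : A !=set0 -> set_dist x A <= 1.
Proof. by move=> [a Aa]; exact: le_trans (set_dist_le x Aa) (e_le1 _ _). Qed.

Lemma set_dist_ltP x A c :
  A !=set0 -> set_dist x A < c -> exists2 a, A a & e x a < c.
Proof.
move=> [a Aa] /inf_lt[]; first by exists (e x a), a.
by move=> _ [b Ab <-]; exists b.
Qed.

Lemma set_dist_triangle x y A :
  A !=set0 -> set_dist x A <= e x y + set_dist y A.
Proof.
move=> A0; rewrite -lerBlDl; apply: set_dist_ge => // a Aa.
by rewrite lerBlDl; exact: le_trans (set_dist_le x Aa) (e_triangle x y a).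
Qed.

Definition excess (A B : set T) := sup [set set_dist a B | a in A].

Lemma excess_ge A B a : B !=set0 -> A a -> set_dist a B <= excess A B.
Proof.
move=> B0 Aa; apply: ub_le_sup; last by exists a.
by exists 1 => _ [b _ <-]; exact: set_dist_le1.
Qed.

Lemma excess_le A B c :
  A !=set0 -> (forall a, A a -> set_dist a B <= c) -> excess A B <= c.
Proof.
move=> [a Aa] ubc; apply: ge_sup; first by exists (set_dist a B), a.
by move=> _ [b Ab <-]; exact: ubc.
Qed.

Definition hausdorff_dist A B := Num.max (excess A B) (excess B A).

Lemma hausdorff_distC A B : hausdorff_dist A B = hausdorff_dist B A.
Proof. by rewrite /hausdorff_dist maxC. Qed.

Lemma hausdorff_dist_ge A B a :
  B !=set0 -> A a -> set_dist a B <= hausdorff_dist A B.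
Proof. by move=> B0 Aa; rewrite le_max (excess_ge B0 Aa). Qed.

Lemma hausdorff_dist_ge0 A B :
  A !=set0 -> B !=set0 -> 0 <= hausdorff_dist A B.
Proof.
move=> [a Aa] B0.
exact: le_trans (set_dist_ge0 a B0) (hausdorff_dist_ge B0 Aa).
Qed.

Lemma hausdorff_dist_le A B c : A !=set0 -> B !=set0 ->
  (forall a, A a -> set_dist a B <= c) ->
  (forall b, B b -> set_dist b A <= c) -> hausdorff_dist A B <= c.
Proof. by move=> A0 B0 ubAB ubBA; rewrite ge_max !excess_le. Qed.

Lemma hausdorff_dist_xx A : A !=set0 -> hausdorff_dist A A = 0.
Proof.
move=> A0; apply/eqP; rewrite eq_le hausdorff_dist_ge0 // andbT.
by apply: hausdorff_dist_le => // a Aa; rewrite -(exx a) set_dist_le.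
Qed.

Lemma hausdorff_dist_triangle A B C : A !=set0 -> B !=set0 -> C !=set0 ->
  hausdorff_dist A C <= hausdorff_dist A B + hausdorff_dist B C.
Proof.
have excess_triangle A' B' C' a : B' !=set0 -> C' !=set0 -> A' a ->
    set_dist a C' <= hausdorff_dist A' B' + hausdorff_dist B' C'.
  move=> B'0 C'0 A'a; rewrite -lerBlDr.
  apply: le_trans (hausdorff_dist_ge B'0 A'a).
  apply: set_dist_ge => // b B'b; rewrite lerBlDr.
  apply: le_trans (set_dist_triangle a b C'0) _.
  by rewrite lerD2l hausdorff_dist_ge.
move=> A0 B0 C0; apply: hausdorff_dist_le => // [a|c Cc]; first exact: excess_triangle.
by rewrite addrC (hausdorff_distC A) (hausdorff_distC B); exact: excess_triangle.
Qed.

End HausdorffDistance.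

Section TruncatedMetric.
Variables (R : realType) (T : Type) (d : T -> T -> R).
Hypothesis d_ge0 : forall x y, 0 <= d x y.
Hypothesis d_triangle : forall x y z, d x z <= d x y + d y z.

Definition truncated_metric x y := Num.min (d x y) 1.

Lemma truncated_metric_ge0 x y : 0 <= truncated_metric x y.
Proof. by rewrite le_min d_ge0 ler01. Qed.

Lemma truncated_metric_le1 x y : truncated_metric x y <= 1.
Proof. by rewrite ge_min lexx orbT. Qed.

Lemma truncated_metricC :
  (forall x y, d x y = d y x) -> forall x y, truncated_metric x y = truncated_metric y x.
Proof. by move=> dC x y; rewrite /truncated_metric dC. Qed.

Lemma truncated_metric_xx : (forall x, d x x = 0) -> forall x, truncated_metric x x = 0.
Proof. by move=> d_xx x; rewrite /truncated_metric d_xx; exact/min_idPl. Qed.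

Lemma truncated_metric_le x y : truncated_metric x y <= d x y.
Proof. by rewrite ge_min lexx. Qed.

Lemma truncated_metric_lt x y eps :
  truncated_metric x y < Num.min eps 1 -> d x y < eps.
Proof.
by rewrite /truncated_metric !minEle; case: (leP (d x y) 1); case: (leP eps 1); lra.
Qed.

Lemma truncated_metric_triangle x y z :
  truncated_metric x z <= truncated_metric x y + truncated_metric y z.
Proof.
rewrite /truncated_metric; have := d_triangle x y z.
have := d_ge0 x y; have := d_ge0 y z.
move: (d x y) (d y z) (d x z) => a b c.
by rewrite !minEle; case: (leP c 1); case: (leP a 1); case: (leP b 1); lra.
Qed.

End TruncatedMetric.

Section MetricTopology.
Variables (R : realType) (Y : topologicalType) (d : Y -> Y -> R).
Hypothesis d_ge0 : forall x y, 0 <= d x y.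
Hypothesis d_eq0 : forall x y, d x y = 0 <-> x = y.
Hypothesis dC : forall x y, d x y = d y x.
Hypothesis d_triangle : forall x y z, d x z <= d x y + d y z.
Hypothesis open_metric : forall U : set Y, open U <->
  (forall x, U x -> exists2 e : R, 0 < e & [set y | d x y < e] `<=` U).

Lemma metric_ball_open x eps : open [set z | d x z < eps].
Proof.
apply/open_metric => z /= dxz; exists (eps - d x z); first by rewrite subr_gt0.
by move=> w /=; have := d_triangle x z w; lra.
Qed.

Lemma metric_ball_nbhs x eps : 0 < eps -> nbhs x [set z | d x z < eps].
Proof.
move=> eps_gt0; apply: open_nbhs_nbhs; split; first exact: metric_ball_open.
by rewrite /= (d_eq0 x x).2.
Qed.

Lemma nbhs_metric_ball x U :
  nbhs x U -> exists2 eps, 0 < eps & [set z | d x z < eps] `<=` U.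
Proof.
rewrite nbhsE => -[V [oV Vx] VU]; have [eps eps_gt0 ballV] := (open_metric V).1 oV x Vx.
by exists eps => // z /ballV; exact: VU.
Qed.

Lemma metric_hausdorff : hausdorff_space Y.
Proof.
move=> p q clpq; apply/(d_eq0 p q).1/eqP; rewrite eq_le d_ge0 andbT leNgt.
apply/negP => dpq_gt0; have half_gt0 : 0 < d p q / 2 by rewrite divr_gt0.
have [z [/= pz qz]] :=
  clpq _ _ (metric_ball_nbhs p half_gt0) (metric_ball_nbhs q half_gt0).
by have := d_triangle p z q; rewrite (dC z q); lra.
Qed.

Lemma closed_set_dist_eq0 (A : set Y) x : closed A -> A !=set0 ->
  set_dist (truncated_metric d) x A = 0 -> A x.
Proof.
move=> clA A0 dxA0; apply: clA => B /nbhs_metric_ball[eps eps_gt0 ballB].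
have : set_dist (truncated_metric d) x A < Num.min eps 1.
  by rewrite dxA0 lt_min eps_gt0 ltr01.
case/(set_dist_ltP A0) => a Aa xa; exists a; split => //.
exact/ballB/(truncated_metric_lt xa).
Qed.

End MetricTopology.

Section Orbits.
Variables (R : realType) (Y : topologicalType) (Phi : R -> Y -> Y).
Hypothesis Phi0 : forall y, Phi 0 y = y.
Hypothesis PhiD : forall s t y, Phi (s + t) y = Phi s (Phi t y).

Lemma orbit_refl y : Defs.orbit Phi y y.
Proof. by exists 0 => //; rewrite Phi0. Qed.

Lemma orbit_eq y z : Defs.orbit Phi y z -> Defs.orbit Phi z = Defs.orbit Phi y.
Proof.
move=> [s _ <-]; apply/seteqP; split => w [t _ <-].
- by exists (t + s) => //; rewrite PhiD.
- by exists (t - s) => //; rewrite -PhiD subrK.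
Qed.

Lemma orbit_proj_eq y z : Defs.orbit Phi y z -> orbit_proj Phi z = orbit_proj Phi y.
Proof. by move=> yz; apply: val_inj; exact: orbit_eq. Qed.

Lemma orbit_projP (O : orbit_space Phi) : exists y, O = orbit_proj Phi y.
Proof.
by case: O => A OA; have /asboolP[y Ay] := OA; exists y; exact: val_inj.
Qed.

Lemma orbit_neq0 y : Defs.orbit Phi y !=set0.
Proof. by exists y; exact: orbit_refl. Qed.

Lemma orbit_space_neq0 (O : orbit_space Phi) : sval O !=set0.
Proof. by have [y ->] := orbit_projP O; exact: orbit_neq0. Qed.

End Orbits.

Section OrbitSpaceMetric.
Variables (R : realType) (Y : topologicalType) (d : Y -> Y -> R).
Hypothesis d_ge0 : forall x y, 0 <= d x y.
Hypothesis d_eq0 : forall x y, d x y = 0 <-> x = y.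
Hypothesis dC : forall x y, d x y = d y x.
Hypothesis d_triangle : forall x y z, d x z <= d x y + d y z.
Hypothesis open_metric : forall U : set Y, open U <->
  (forall x, U x -> exists2 e : R, 0 < e & [set y | d x y < e] `<=` U).
Variable Phi : R -> Y -> Y.
Hypothesis Phi0 : forall y, Phi 0 y = y.
Hypothesis PhiD : forall s t y, Phi (s + t) y = Phi s (Phi t y).
Hypothesis Phi_cont : continuous (fun p : R * Y => Phi p.1 p.2).
Variable r : R.
Hypothesis orbit_segment : forall y, Defs.orbit Phi y = [set Phi t y | t in `[0, r]].

Lemma orbit_compact y : compact (Defs.orbit Phi y).
Proof.
rewrite orbit_segment; apply: continuous_compact; last exact: segment_compact.
apply: continuous_subspaceT => t.
apply: (@continuous_comp _ _ _ (fun s => (s, y)) (fun p : R * Y => Phi p.1 p.2));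
  last exact: Phi_cont.
by apply: (@cvg_pair _ _ _ (nbhs t) (nbhs t) (nbhs y)) => //; exact: cvg_cst.
Qed.

Lemma orbit_closed y : closed (Defs.orbit Phi y).
Proof.
apply: compact_closed (@orbit_compact y).
exact: metric_hausdorff d_ge0 d_eq0 dC d_triangle open_metric.
Qed.

Lemma action_segment_uniform y eps : 0 < eps -> exists2 del, 0 < del &
  forall z, d y z < del -> forall t, [set` `[0, r]] t -> d (Phi t y) (Phi t z) < eps.
Proof.
move=> eps_gt0; have /compact_near_coveringP cover := @segment_compact R 0 r.
have half_gt0 : 0 < eps / 2 by rewrite divr_gt0.
have near_t t : [set` `[0, r]] t -> \forall t' \near t & z \near nbhs y,
    d (Phi t' y) (Phi t' z) < eps.
  move=> _; have [[A B] /= [nA nB] sub] :=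
    @Phi_cont (t, y) _ (metric_ball_nbhs d_eq0 d_triangle open_metric (Phi t y) half_gt0).
  exists (A, B) => // -[t' z] /= [At' Bz].
  have /= := sub (t', z) (conj At' Bz).
  have /= := sub (t', y) (conj At' (nbhs_singleton nB)).
  by have := d_triangle (Phi t' y) (Phi t y) (Phi t' z); rewrite (dC _ (Phi t y)); lra.
have [del del_gt0 ball_del] := nbhs_metric_ball open_metric
  (cover Y (nbhs y) (fun z t => d (Phi t y) (Phi t z) < eps) _ near_t).
by exists del => // z /ball_del.
Qed.

Let e := truncated_metric d.
Let e_ge0 : forall x y, 0 <= e x y := truncated_metric_ge0 d_ge0.
Let e_le1 : forall x y, e x y <= 1 := truncated_metric_le1 d.
Let eC : forall x y, e x y = e y x := truncated_metricC dC.
Let e_xx : forall x, e x x = 0 := truncated_metric_xx (fun x => (d_eq0 x x).2 erefl).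
Let e_triangle : forall x y z, e x z <= e x y + e y z :=
  truncated_metric_triangle d_ge0 d_triangle.

Definition orbit_dist (O1 O2 : orbit_space Phi) :=
  hausdorff_dist e (sval O1) (sval O2).

Lemma orbit_dist_eq0 O1 O2 : orbit_dist O1 O2 = 0 -> O1 = O2.
Proof.
have [y1 ->] := orbit_projP O1; have [y2 ->] := orbit_projP O2 => dO12.
have neq0 := orbit_neq0 Phi0.
suff : Defs.orbit Phi y2 y1 by move/(orbit_proj_eq PhiD).
apply: (closed_set_dist_eq0 (x := y1) open_metric (@orbit_closed y2) (neq0 y2)).
apply/eqP; rewrite eq_le set_dist_ge0 ?andbT //= -dO12.
exact: hausdorff_dist_ge (neq0 _) (orbit_refl Phi0 y1).
Qed.

Lemma orbit_dist_le y z c :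
  (forall t, [set` `[0, r]] t -> d (Phi t y) (Phi t z) <= c) ->
  orbit_dist (orbit_proj Phi y) (orbit_proj Phi z) <= c.
Proof.
move=> close_d.
have close t : [set` `[0, r]] t -> e (Phi t y) (Phi t z) <= c.
  by move=> tr; exact: le_trans (truncated_metric_le _ _ _) (close_d t tr).
have orbit_near u v : (forall t, [set` `[0, r]] t -> e (Phi t u) (Phi t v) <= c) ->
    forall a, Defs.orbit Phi u a -> set_dist e a (Defs.orbit Phi v) <= c.
  move=> uv a; rewrite {1}orbit_segment => -[t tr <-].
  have vt : Defs.orbit Phi v (Phi t v) by rewrite orbit_segment; exists t.
  exact: le_trans (set_dist_le e_ge0 _ vt) (uv t tr).
apply: hausdorff_dist_le (orbit_near _ _ close) (orbit_near _ _ _).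
- exact: orbit_neq0.
- exact: orbit_neq0.
- by move=> t tr; rewrite eC; exact: close.
Qed.

Lemma open_orbit_space_ball (U : set (orbit_space Phi)) : open U ->
  forall O, U O -> exists2 eps, 0 < eps & [set O' | orbit_dist O O' < eps] `<=` U.
Proof.
move=> oU O; have [y ->] := orbit_projP O => Uy.
have [eps eps_gt0 ballU] := (open_metric _).1 oU y Uy.
exists (Num.min eps 1); first by rewrite lt_min eps_gt0 ltr01.
move=> O' /=; have [z ->] := orbit_projP O' => yz.
have : set_dist e y (Defs.orbit Phi z) < Num.min eps 1.
  apply: le_lt_trans yz.
  exact: hausdorff_dist_ge (orbit_neq0 Phi0 z) (orbit_refl Phi0 y).
case/(set_dist_ltP (orbit_neq0 Phi0 z)) => a za ya.
by have := ballU a (truncated_metric_lt ya); rewrite /preimage /= (orbit_proj_eq PhiD za).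
Qed.

Lemma orbit_space_ball_open (U : set (orbit_space Phi)) :
  (forall O, U O -> exists2 eps, 0 < eps & [set O' | orbit_dist O O' < eps] `<=` U) ->
  open U.
Proof.
move=> ballU; apply/open_metric => y /= Uy.
have [eps eps_gt0 ballU_eps] := ballU _ Uy.
have [|del del_gt0 near_y] := action_segment_uniform y (eps := eps / 2).
  by rewrite divr_gt0.
exists del => // z yz; apply: ballU_eps => /=.
have : orbit_dist (orbit_proj Phi y) (orbit_proj Phi z) <= eps / 2.
  by apply: orbit_dist_le => t tr; exact/ltW/near_y.
lra.
Qed.

Theorem orbit_space_metrizable : metrizable R (orbit_space Phi).
Proof.
have neq0 := orbit_space_neq0 Phi0.
exists orbit_dist; split.
- by move=> O1 O2; exact: hausdorff_dist_ge0.
- by move=> O1 O2; split=> [| ->]; [exact: orbit_dist_eq0 | exact: hausdorff_dist_xx].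
- by move=> O1 O2; exact: hausdorff_distC.
- by move=> O1 O2 O3; exact: hausdorff_dist_triangle.
- by move=> U; split; [exact: open_orbit_space_ball | exact: orbit_space_ball_open].
Qed.

End OrbitSpaceMetric.

Theorem lemma5p2 (R : realType) (Y : topologicalType) (Phi : R -> Y -> Y) :
  locally_compact [set: Y] ->
  metrizable R Y ->
  continuous_action Phi ->
  bounded_periods Phi ->
  metrizable R (orbit_space Phi).
Proof.
move=> _ [d [d_ge0 d_eq0 dC d_triangle open_metric]] [Phi0 PhiD Phi_cont] [r _ segment].
exact: (@orbit_space_metrizable _ _ d d_ge0 d_eq0 dC d_triangle open_metric
  Phi Phi0 PhiD Phi_cont r segment).
Qed.
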